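(* Let $n\ge8$, $m\in\mathbb N$, $p\in(0,1)$, and let $\mathcal I=\{11,12,21,22\}$. For $i=1,2,3$, $$\|\bar g_{l_{i,1}}\ast_{l_{i,3}}^{l_{i,2}}\bar g_{l_{i,4}}\|_2^2=\sum_{I\subseteq\mathcal I}(-1)^{|I|}\pi(H_{i,I}),$$ where $(l_{1,1},l_{1,2},l_{1,3},l_{1,4})=(1,0,1,1)$, $(l_{2,1},l_{2,2},l_{2,3},l_{2,4})=(2,1,1,2)$, $(l_{3,1},l_{3,2},l_{3,3},l_{3,4})=(2,1,1,1)$; that is, $\|\bar g_1\ast_1^0\bar g_1\|_2^2$, $\|\bar g_2\ast_1^1\bar g_2\|_2^2$ and $\|\bar g_2\ast_1^1\bar g_1\|_2^2$ equal the corresponding sums for $i=1,2,3$ respectively.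
   Context: Random intersection graph $\mathcal G(n,m,p)$: vertices $v_1,\ldots,v_n$, attributes $a_1,\ldots,a_m$; each vertex chooses each attribute independently with probability $p$; two vertices are adjacent iff they chose a common attribute; $\hat p=1-(1-p^2)^m$. For a graph $H$ with vertices among $v_1,\ldots,v_n$, $\pi(H)=\mathbb P(H\subseteq\mathcal G(n,m,p))$ (depends only on the isomorphism type of $H$); $\pi$ of the graph with no vertices is $1$. $\mu_{m,p}(x)=p^{|x|}(1-p)^{m-|x|}$ on $\{0,1\}^m$; $g(x,y)=1$ if $x_i=y_i=1$ for some $i$, else $0$; $g_1(x)=\int g(x,y)\,d\mu_{m,p}(y)$; $\bar g_2=g-\hat p$, $\bar g_1=g_1-\hat p$; norms are $L^2$ with respect to products of $\mu_{m,p}$; contraction $f\ast_b^ah(x_1,..,x_{b-a},y_1,..,y_{k-b},z_1,..,z_{l-b})=\int f(w,x,y)h(w,x,z)\,d\mu_{m,p}^{\otimes a}(w)$ for $f$ on $(\{0,1\}^m)^k$, $h$ on $(\{0,1\}^m)^l$. Graphs with edges labelled by $\mathcal I$: $G_1$ is the star $K_{1,4}$ with centre $v$ and leaves $u_{11},u_{12},u_{21},u_{22}$, edges $e_{ab}=\{v,u_{ab}\}$; $G_2$ is the $4$-cycle on $x_1,x_2,y_1,y_2$ with edges $e_{ab}=\{x_a,y_b\}$; $G_3$ is the path on $z_{12},x_1,y,x_2,z_{22}$ with edges $e_{11}=\{x_1,y\}$, $e_{12}=\{x_1,z_{12}\}$, $e_{21}=\{x_2,y\}$, $e_{22}=\{x_2,z_{22}\}$.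 For $I\subseteq\mathcal I$, $G_{i,I}$ is the subgraph of $G_i$ induced by the edges $e_{ab}$, $ab\in I$. $H_{i,I}$ is a graph on $8$ vertices from $\{v_1,\ldots,v_n\}$ consisting of a copy of $G_{i,I}$, together with $4-|I|$ further pairwise vertex-disjoint edges (disjoint from $G_{i,I}$), and isolated vertices. *)

(* integrals w.r.t. the finite product measures are finite weighted sums. *)
From HB Require Import structures.
From mathcomp Require Import all_boot all_order all_algebra.
From mathcomp Require Import reals.
Set Implicit Arguments. Unset Strict Implicit. Unset Printing Implicit Defensive.
Import Order.TTheory GRing.Theory Num.Theory.
Local Open Scope ring_scope.

Definition cube (m : nat) := {ffun 'I_m -> bool}.
Definition cube0 (m : nat) : cube m := [ffun=> false].
Definition weight (m : nat) (x : cube m) : nat := #|[set i | x i]|.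

Section Defs.
Variables (R : realType) (m : nat) (p : R).

Definition mu (x : cube m) : R := p ^+ weight x * (1 - p) ^+ (m - weight x).

Definition adj (x y : cube m) : bool := [exists i, x i && y i].
Definition g (x y : cube m) : R := (adj x y)%:R.
Definition phat : R := 1 - (1 - p ^+ 2) ^+ m.
Definition g1 (x : cube m) : R := \sum_(y : cube m) g x y * mu y.
Definition gbar2 (x y : cube m) : R := g x y - phat.
Definition gbar1 (x : cube m) : R := g1 x - phat.

(* functions of several variables in {0,1}^m, represented on sequences of
   arguments (a function of k variables only looks at the first k entries) *)
Definition gbar (k : nat) : seq (cube m) -> R :=
  match k with
  | 1%N => fun s => gbar1 (nth (cube0 m) s 0)
  | _ => fun s => gbar2 (nth (cube0 m) s 0) (nth (cube0 m) s 1)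
  end.

Definition mu_prod (s : seq (cube m)) : R := \prod_(c <- s) mu c.

(* contraction f *_b^a h for f of k variables and h of l variables:
   (x_1..x_{b-a}, y_1..y_{k-b}, z_1..z_{l-b}) |->
      int f(w,x,y) h(w,x,z) dmu^{(x) a}(w) *)
Definition contr (a b k l : nat) (f h : seq (cube m) -> R) : seq (cube m) -> R :=
  fun v =>
    let x := take (b - a) v in
    let y := take (k - b) (drop (b - a) v) in
    let z := drop ((b - a) + (k - b)) v in
    \sum_(w : a.-tuple (cube m)) mu_prod w * f (w ++ x ++ y) * h (w ++ x ++ z).

Definition contr_arity (a b k l : nat) : nat := ((b - a) + (k - b) + (l - b))%N.

Definition L2sq (d : nat) (F : seq (cube m) -> R) : R :=
  \sum_(v : d.-tuple (cube m)) mu_prod v * F v ^+ 2.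
End Defs.

Record graph (n : nat) := Graph { gV : {set 'I_n}; gE : rel 'I_n }.

(* pi(H) = P(H subgraph of G(n,m,p)): the vertices choose attribute vectors
   X v independently with law mu; H subset G iff every edge of H joins two
   vertices sharing an attribute *)
Definition piH (R : realType) (n m : nat) (p : R) (H : graph n) : R :=
  \sum_(X : {ffun 'I_n -> cube m})
     (\prod_(v : 'I_n) mu p (X v)) *
     ([forall u, forall v, gE H u v ==> adj (X u) (X v)])%:R.

(* edge labels I = {11,12,21,22}; (a,b) : 'I_2 * 'I_2 stands for label (a+1)(b+1) *)
Definition label := ('I_2 * 'I_2)%type.

(* endpoints of the labelled edges e_ab of G_1, G_2, G_3 (i = 0,1,2);
   vertices encoded in 'I_5:
   G_1: v=0, u_ab = 1+2a+b ;  G_2: x_a = a, y_b = 2+b ;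
   G_3: x_a = a, y = 2, z_12 = 3, z_22 = 4 *)
Definition ends (i : 'I_3) (e : label) : 'I_5 * 'I_5 :=
  let a := nat_of_ord e.1 in let b := nat_of_ord e.2 in
  match nat_of_ord i with
  | 0%N => (inord 0, inord (1 + 2 * a + b))
  | 1%N => (inord a, inord (2 + b))
  | _ => (inord a, if b == 0%N then inord 2 else inord (3 + a))
  end.

Definition VG (i : 'I_3) (I : {set label}) : {set 'I_5} :=
  [set v | [exists e in I, (v == (ends i e).1) || (v == (ends i e).2)]].

Definition same_edge n (u v : 'I_n) (xy : 'I_n * 'I_n) : bool :=
  ((u == xy.1) && (v == xy.2)) || ((u == xy.2) && (v == xy.1)).

(* H is an H_{i,I}: a graph on 8 vertices of {v_1..v_n} consisting of a copy
   (via the injective phi) of G_{i,I}, together with 4-|I| further pairwise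
   vertex-disjoint edges psi e (indexed by the labels e not in I), disjoint
   from the copy of G_{i,I}, and isolated vertices *)
Definition isH (n : nat) (i : 'I_3) (I : {set label}) (H : graph n) : Prop :=
  exists (phi : 'I_5 -> 'I_n) (psi : label -> 'I_n * 'I_n),
  {in VG i I &, injective phi} /\
  (forall e, e \notin I -> (psi e).1 != (psi e).2) /\
  (forall e e', e \notin I -> e' \notin I -> e != e' ->
     [disjoint [set (psi e).1; (psi e).2] & [set (psi e').1; (psi e').2]]) /\
  (forall e v, e \notin I -> v \in VG i I ->
     (phi v != (psi e).1) && (phi v != (psi e).2)) /\
  (forall u v, gE H u v =
     [exists e in I, same_edge u v (phi (ends i e).1, phi (ends i e).2)]
     || [exists e in ~: I, same_edge u v (psi e)]) /\
  #|gV H| = 8%N /\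
  (phi @: VG i I \subset gV H) /\
  (forall e, e \notin I -> ((psi e).1 \in gV H) && ((psi e).2 \in gV H)).

(* (l_{i,1}, l_{i,2}, l_{i,3}, l_{i,4}) for i = 1,2,3 (encoded 0,1,2) *)
Definition lidx (i : 'I_3) : nat * nat * nat * nat :=
  match nat_of_ord i with
  | 0%N => (1, 0, 1, 1)
  | 1%N => (2, 1, 1, 2)
  | _ => (2, 1, 1, 1)
  end%N.

From HB Require Import structures.
From mathcomp Require Import all_boot all_order all_algebra.
From mathcomp Require Import reals.
From mathcomp Require Import zify ring.
Set Implicit Arguments. Unset Strict Implicit. Unset Printing Implicit Defensive.
Import Order.TTheory GRing.Theory Num.Theory.
Local Open Scope ring_scope.

(* Expanding the product of the centered edge weights [g - p̂] over the four labelled edges of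
   G_i gives, for each set I of labels, the term (-p̂)^(4 - |I|) E[prod_(e in I) g_e], and
   (-1)^(4 - |I|) = (-1)^|I|.  This term is exactly (-1)^|I| π(H_{i,I}): the 4 - |I| extra
   edges of H_{i,I} are vertex-disjoint from each other and from the copy of G_{i,I}, so each
   contributes an independent factor E[g] = p̂.  Hence the alternating sum is E[prod_e ḡ_2]
   over the five vertices of G_i.  Integrating out the vertices one at a time evaluates it: a
   pendant vertex turns ḡ_2(v, w) into ḡ_1(v), and two vertices with the same neighbourhood
   produce the square of the contraction, i.e. the squared L^2 norm on the left. *)

Lemma big_tuple0 (V : nmodType) (T : finType) (F : 0.-tuple T -> V) :
  \sum_(t : 0.-tuple T) F t = F [tuple].
Proof. by rewrite (big_pred1 [tuple]) // => t /=; apply/esym/eqP; exact: tuple0. Qed.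

Lemma big_tupleS (V : nmodType) (T : finType) (k : nat) (F : k.+1.-tuple T -> V) :
  \sum_(t : k.+1.-tuple T) F t = \sum_(x : T) \sum_(t : k.-tuple T) F [tuple of x :: t].
Proof.
rewrite pair_bigA /= (reindex (fun q : T * k.-tuple T => [tuple of q.1 :: q.2])) /=.
  by apply: eq_bigr => -[x t].
exists (fun t : k.+1.-tuple T => (thead t, [tuple of behead t])).
  by move=> [x t] _ /=; congr pair; apply: val_inj.
by move=> [[|x s] st] _; apply: val_inj.
Qed.

Lemma natr_forall (R : comPzSemiRingType) (I : finType) (P : pred I) :
  ([forall i, P i])%:R = \prod_i (P i)%:R :> R.
Proof.
case: (boolP [forall i, P i]) => [/forallP allP | /forallPn[i /negbTE Pi]].
  by rewrite big1 // => i _; rewrite allP.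
by rewrite (bigD1 i) //= Pi mul0r.
Qed.

Lemma prod_subr_expand (R : comPzRingType) (L : finType) (a : L -> R) (c : R) :
  \prod_e (a e - c) = \sum_(A : {set L}) (- c) ^+ #|~: A| * \prod_(e in A) a e.
Proof.
rewrite (bigA_distr _ _ a (fun _ => - c)); apply: eq_bigr => A _.
rewrite (bigID [in A]) /= mulrC; congr (_ * _); last by apply: eq_bigr => e ->.
by rewrite -prodr_const; apply: eq_big => [e | e /negbTE ->]; rewrite ?inE.
Qed.

Lemma signr_cardsC (R : pzRingType) (L : finType) (A : {set L}) :
  ~~ odd #|L| -> (-1) ^+ #|~: A| = (-1) ^+ #|A| :> R.
Proof.
move=> evenL; rewrite -signr_odd -[RHS]signr_odd; congr (_ ^+ _).
by move: evenL; rewrite -(cardsC A) oddD; case: (odd #|A|); case: (odd #|~: A|).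
Qed.

Lemma exists_in_setC_if (L : finType) (I : {set L}) (P Q : pred L) :
  [exists e in I, P e] || [exists e in ~: I, Q e] = [exists e, if e \in I then P e else Q e].
Proof.
apply/orP/existsP => [[]/existsP[e /andP[eI Pe]] | [e]].
- by exists e; rewrite eI.
- by exists e; move: eI; rewrite inE => /negbTE ->.
by case: ifP => eI Pe; [left | right]; apply/existsP; exists e; rewrite ?inE eI.
Qed.

Lemma inord_eq (n a b : nat) : (a <= n)%N -> (b <= n)%N ->
  (inord a == inord b :> 'I_n.+1) = (a == b).
Proof. by move=> an bn; apply/eqP/eqP => [/(congr1 val)|-> //]; rewrite /= !inordK. Qed.

Lemma prod_label (R : comPzSemiRingType) (F : label -> R) :
  \prod_(e : label) F e =
  F (ord0, ord0) * F (ord0, ord_max) * F (ord_max, ord0) * F (ord_max, ord_max).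
Proof.
transitivity (\prod_(a : 'I_2) \prod_(b : 'I_2) F (a, b)).
  by rewrite pair_bigA; apply: eq_bigr => -[].
rewrite !big_ord_recl !big_ord0 !mulr1 mulrA.
by have -> : lift ord0 ord0 = ord_max :> 'I_2 by apply/val_inj.
Qed.

Section RandomIntersectionGraph.
Variables (R : realType) (m : nat) (p : R).
Local Notation T := (cube m).

Lemma muE (x : T) : mu p x = \prod_i (if x i then p else 1 - p).
Proof.
rewrite (bigID (fun i => x i)) /=.
rewrite (eq_bigr (fun _ => p)); last by move=> i ->.
rewrite [X in _ * X](eq_bigr (fun _ => 1 - p)); last by move=> i /negbTE ->.
have -> : \prod_(i | x i) p = p ^+ weight x.
  by rewrite -prodr_const; apply: eq_bigl => i; rewrite inE.
have -> : \prod_(i | ~~ x i) (1 - p) = (1 - p) ^+ #|~: [set i | x i]|.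
  by rewrite -prodr_const; apply: eq_bigl => i; rewrite !inE.
rewrite /mu /weight; congr (_ * _ ^+ _).
by have := cardsC [set i | x i]; rewrite card_ord; lia.
Qed.

Lemma sum_mu : \sum_(x : T) mu p x = 1.
Proof.
under eq_bigr do rewrite muE.
rewrite -(bigA_distr_bigA (fun (i : 'I_m) (b : bool) => if b then p else 1 - p)).
by apply: big1 => i _; rewrite big_bool /= addrC subrK.
Qed.

Section ProductMeasure.
Variable I : finType.
Implicit Types (X : {ffun I -> T}) (F G K : {ffun I -> T} -> R).

Definition mu_ffun X : R := \prod_i mu p (X i).

Definition expect F : R := \sum_X mu_ffun X * F X.

Definition upd X (u : I) (x : T) : {ffun I -> T} := [ffun w => if w == u then x else X w].

Definition ignores F (u : I) := forall X x, F (upd X u x) = F X.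

Lemma updE X u x w : upd X u x w = if w == u then x else X w.
Proof. by rewrite ffunE. Qed.

Lemma upd_same X u x : upd X u x u = x.
Proof. by rewrite updE eqxx. Qed.

Lemma upd_other X u x w : w != u -> upd X u x w = X w.
Proof. by rewrite updE => /negbTE ->. Qed.

Lemma updK X u x : upd (upd X u x) u (X u) = X.
Proof. by apply/ffunP => w; rewrite !updE; case: eqP => // ->. Qed.

Lemma mu_ffun_upd X u x : mu_ffun X * mu p x = mu_ffun (upd X u x) * mu p (X u).
Proof.
rewrite /mu_ffun (bigD1 u) //= [in RHS](bigD1 u) //= upd_same.
rewrite [X in _ = _ * X * _](eq_bigr (fun i => mu p (X i))) => [|i /negbTE ui].
  by ring.
by rewrite updE ui.
Qed.

Lemma sum_mu_ffun : \sum_X mu_ffun X = 1.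
Proof.
rewrite /mu_ffun -(bigA_distr_bigA (fun (i : I) (x : T) => mu p x)).
by apply: big1 => i _; rewrite sum_mu.
Qed.

Lemma eq_expect F G : F =1 G -> expect F = expect G.
Proof. by move=> FG; apply: eq_bigr => X _; rewrite FG. Qed.

Lemma expect_cst c : expect (fun _ => c) = c.
Proof. by rewrite /expect -big_distrl /= sum_mu_ffun mul1r. Qed.

Lemma expectZ c F : expect (fun X => c * F X) = c * expect F.
Proof. by rewrite /expect big_distrr; apply: eq_bigr => X _; rewrite mulrCA. Qed.

Lemma expect_sum (J : finType) (F : J -> {ffun I -> T} -> R) :
  expect (fun X => \sum_j F j X) = \sum_j expect (F j).
Proof. by rewrite /expect exchange_big; apply: eq_bigr => X _; rewrite big_distrr. Qed.

(* The involution (X, x) |-> (upd X u x, X u) preserves the product weight. *)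
Lemma expect_marginal (u : I) F :
  expect F = expect (fun X => \sum_x mu p x * F (upd X u x)).
Proof.
transitivity (\sum_X \sum_(x : T) mu_ffun X * mu p x * F X).
  by apply: eq_bigr => X _; rewrite -big_distrl -big_distrr /= sum_mu mulr1.
rewrite /expect; under [RHS]eq_bigr do rewrite big_distrr /=.
rewrite !pair_bigA /=.
pose h (q : {ffun I -> T} * T) := (upd q.1 u q.2, q.1 u).
have hK : involutive h by case=> X x; rewrite /h /= updK upd_same.
rewrite (reindex_inj (inv_inj hK)); apply: eq_bigr => -[X x] _ /=.
by rewrite -(mu_ffun_upd X u x) mulrA.
Qed.

Lemma expect_integrate (u : I) F G :
  (forall X, \sum_x mu p x * F (upd X u x) = G X) -> expect F = expect G.
Proof. by move=> FG; rewrite (expect_marginal u); apply: eq_expect. Qed.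

Lemma expect_integrate_factor (u : I) (f : T -> {ffun I -> T} -> R) K :
  (forall x, ignores (f x) u) -> ignores K u ->
  expect (fun X => f (X u) X * K X) = expect (fun X => (\sum_x mu p x * f x X) * K X).
Proof.
move=> fu Ku; apply: (expect_integrate (u := u)) => X; rewrite big_distrl.
by apply: eq_bigr => x _; rewrite upd_same fu Ku mulrA.
Qed.

Lemma expect_coord (u : I) (h : T -> R) :
  expect (fun X => h (X u)) = \sum_x mu p x * h x.
Proof.
rewrite (expect_integrate (u := u) (G := fun _ => \sum_x mu p x * h x)) ?expect_cst //.
by move=> X; apply: eq_bigr => x _; rewrite upd_same.
Qed.

Lemma expect_coord2 (u v : I) (h : T -> T -> R) : u != v ->
  expect (fun X => h (X u) (X v)) = \sum_x mu p x * \sum_y mu p y * h x y.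
Proof.
move=> uv; rewrite -(expect_coord u (fun x => \sum_y mu p y * h x y)).
by apply: (expect_integrate (u := v)) => X; apply: eq_bigr => y _; rewrite upd_same upd_other.
Qed.

End ProductMeasure.

Lemma expect_comp_inj (I J : finType) (phi : I -> J) (s : seq I) (G : {ffun I -> T} -> R) :
  {in s &, injective phi} -> (forall X Y : {ffun I -> T}, {in s, X =1 Y} -> G X = G Y) ->
  expect (fun X : {ffun J -> T} => G [ffun i => X (phi i)]) = expect G.
Proof.
elim: s G => [|a s IH] G phi_inj G_on_s.
  have G_cst X : G X = G [ffun=> cube0 m] by apply: G_on_s.
  by rewrite (eq_expect (fun X => G_cst _)) (eq_expect G_cst) !expect_cst.
have phi_eq := inj_in_eq phi_inj.
pose G' Y := \sum_x mu p x * G (upd Y a x).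
rewrite [RHS](expect_marginal a) -(IH G').
- apply: (expect_integrate (u := phi a)) => X; apply: eq_bigr => x _.
  congr (_ * _); apply: G_on_s => i si.
  by rewrite !ffunE phi_eq ?mem_head.
- by move=> i j si sj; apply: phi_inj; rewrite inE ?si ?sj orbT.
- move=> X Y XY; apply: eq_bigr => x _; congr (_ * _); apply: G_on_s => i.
  by rewrite inE !updE; case: eqP => //= _ /XY.
Qed.

Lemma adjC (x y : T) : adj x y = adj y x.
Proof. by apply: eq_existsb => i; rewrite andbC. Qed.

Lemma sum_mu_nadj (x : T) :
  \sum_y mu p y * (~~ adj x y)%:R = \prod_i (if x i then 1 - p else 1).
Proof.
under [LHS]eq_bigr do rewrite muE /adj negb_exists natr_forall -big_split.
rewrite -(bigA_distr_bigA (fun i (b : bool) => (if b then p else 1 - p) * (~~ (x i && b))%:R)).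
by apply: eq_bigr => i _; rewrite big_bool; case: (x i) => /=; ring.
Qed.

Lemma sum_mu2_g : \sum_(x : T) \sum_(y : T) mu p x * mu p y * g R x y = phat m p.
Proof.
have g_nadj (x y : T) : g R x y = 1 - (~~ adj x y)%:R by rewrite /g; case: adj => /=; ring.
transitivity (\sum_(x : T) mu p x * (1 - \sum_y mu p y * (~~ adj x y)%:R)).
  apply: eq_bigr => x _; rewrite -[in X in _ * (X - _)]sum_mu -sumrB big_distrr /=.
  by apply: eq_bigr => y _; rewrite g_nadj; ring.
under eq_bigr do rewrite mulrBr mulr1 sum_mu_nadj.
rewrite sumrB sum_mu /phat; congr (1 - _).
under eq_bigr do rewrite muE -big_split.
rewrite -(bigA_distr_bigA
  (fun i (b : bool) => (if b then p else 1 - p) * (if b then 1 - p else 1))).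
rewrite (eq_bigr (fun _ => 1 - p ^+ 2)) => [|i _]; last by rewrite big_bool /=; ring.
by rewrite prodr_const card_ord.
Qed.


Lemma expect_g (I : finType) (u v : I) (F : {ffun I -> T} -> R) :
  u != v -> ignores F u -> ignores F v ->
  expect (fun X => g R (X u) (X v) * F X) = phat m p * expect F.
Proof.
move=> uv Fu Fv; rewrite (expect_integrate_factor (f := fun x X => g R x (X v))) //; last first.
  by move=> x X y; rewrite upd_other 1?eq_sym.
rewrite (expect_integrate_factor (u := v) (f := fun y _ => \sum_x mu p x * g R x y)) //= expectZ.
rewrite -sum_mu2_g exchange_big; congr (_ * _); apply: eq_bigr => y _.
by rewrite big_distrr /=; apply: eq_bigr => x _; rewrite mulrCA mulrA.
Qed.

Lemma expect_prod_g_disjoint (I L : finType) (psi : L -> I * I) (s : seq L)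
    (A : {ffun I -> T} -> R) :
  uniq s -> {in s, forall e, (psi e).1 != (psi e).2} ->
  {in s &, forall e e', e != e' ->
     [disjoint [set (psi e).1; (psi e).2] & [set (psi e').1; (psi e').2]]} ->
  {in s, forall e, ignores A (psi e).1 /\ ignores A (psi e).2} ->
  expect (fun X => A X * \prod_(e <- s) g R (X (psi e).1) (X (psi e).2))
  = phat m p ^+ size s * expect A.
Proof.
elim: s A => [|e s IH] A /=.
  by move=> *; rewrite expr0 mul1r; apply: eq_expect => X; rewrite big_nil mulr1.
move=> /andP[es uniq_s] loop_free disj A_ign.
have in_tail e' : e' \in s -> e' \in e :: s by rewrite inE => ->; rewrite orbT.
have far w e' : w \in [set (psi e).1; (psi e).2] -> e' \in s ->
    ((psi e').1 != w) && ((psi e').2 != w).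
  move=> we e's; have ee' : e != e' by apply: contraNneq es => ->.
  have := disjointFr (disj e e' (mem_head _ _) (in_tail _ e's) ee') we.
  by rewrite !inE => /negbT; rewrite negb_or ![w == _]eq_sym.
pose F X := A X * \prod_(e' <- s) g R (X (psi e').1) (X (psi e').2).
have F_ign w : w \in [set (psi e).1; (psi e).2] -> ignores A w -> ignores F w.
  move=> we Aw X x; rewrite /F Aw; congr (_ * _); apply: eq_big_seq => e' e's.
  by have /andP[? ?] := far w e' we e's; rewrite !upd_other.
have [A1 A2] := A_ign e (mem_head _ _).
rewrite (eq_expect (G := fun X => g R (X (psi e).1) (X (psi e).2) * F X)); last first.
  by move=> X; rewrite big_cons mulrCA.
rewrite expect_g ?loop_free ?mem_head //; last 2 first.
- by apply: F_ign A1; rewrite !inE eqxx.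
- by apply: F_ign A2; rewrite !inE eqxx orbT.
rewrite IH // => [|e' e's|e1 e2 e1s e2s|e' e's]; rewrite ?exprS ?mulrA //.
- exact: loop_free (in_tail _ e's).
- exact: disj (in_tail _ e1s) (in_tail _ e2s).
- exact: A_ign (in_tail _ e's).
Qed.

Lemma forall_edges_adj n (L : finType) (f : L -> 'I_n * 'I_n) (E : rel 'I_n)
    (X : {ffun 'I_n -> T}) :
  (forall u v, E u v = [exists e, same_edge u v (f e)]) ->
  [forall u, forall v, E u v ==> adj (X u) (X v)] = [forall e, adj (X (f e).1) (X (f e).2)].
Proof.
move=> Ef; apply/forallP/forallP => [adjE e | adj_f u].
  apply: (implyP (forallP (adjE (f e).1) (f e).2)); rewrite Ef.
  by apply/existsP; exists e; rewrite /same_edge !eqxx.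
apply/forallP => v; apply/implyP; rewrite Ef => /existsP[e].
by case/orP => /andP[/eqP-> /eqP->]; [|rewrite adjC]; apply: adj_f.
Qed.

Lemma piH_edge_list n (H : graph n) (L : finType) (f : L -> 'I_n * 'I_n) :
  (forall u v, gE H u v = [exists e, same_edge u v (f e)]) ->
  piH m p H = expect (fun X => \prod_e g R (X (f e).1) (X (f e).2)).
Proof.
by move=> Ef; apply: eq_bigr => X _; rewrite (forall_edges_adj X Ef) natr_forall.
Qed.

Lemma piH_isH n (i : 'I_3) (I : {set label}) (H : graph n) : isH i I H ->
  piH m p H = phat m p ^+ #|~: I| *
    expect (fun y : {ffun 'I_5 -> T} => \prod_(e in I) g R (y (ends i e).1) (y (ends i e).2)).
Proof.
case=> phi [psi [phi_inj [psi_loop [psi_disj [psi_far [HE _]]]]]].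
pose f e := if e \in I then (phi (ends i e).1, phi (ends i e).2) else psi e.
have Ef u v : gE H u v = [exists e, same_edge u v (f e)].
  by rewrite HE exists_in_setC_if; apply: eq_existsb => e; rewrite /f; case: ifP.
have VG_ends e : e \in I -> ((ends i e).1 \in VG i I) && ((ends i e).2 \in VG i I).
  by move=> eI; rewrite !inE; apply/andP; split; apply/existsP; exists e; rewrite eI eqxx ?orbT.
pose A (X : {ffun 'I_n -> T}) := \prod_(e in I) g R (X (phi (ends i e).1)) (X (phi (ends i e).2)).
rewrite (piH_edge_list Ef).
rewrite (eq_expect (G := fun X => A X * \prod_(e <- enum (~: I)) g R (X (psi e).1) (X (psi e).2))).
  rewrite expect_prod_g_disjoint ?enum_uniq -?cardE //; last 3 first.
  - by move=> e; rewrite mem_enum inE; apply: psi_loop.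
  - by move=> e e'; rewrite !mem_enum !inE; apply: psi_disj.
  - move=> e; rewrite mem_enum inE => eI.
    by split=> X x; apply: eq_bigr => e' /VG_ends/andP[] /(psi_far e _ eI)/andP[? ?]
      /(psi_far e _ eI)/andP[? ?]; rewrite !upd_other.
  congr (_ * _); rewrite -(expect_comp_inj (phi := phi) (s := enum (VG i I))).
  - by apply: eq_expect => X; apply: eq_bigr => e _; rewrite !ffunE.
  - by move=> u v; rewrite !mem_enum; apply: phi_inj.
  move=> X Y XY; apply: eq_bigr => e /VG_ends/andP[e1 e2].
  by rewrite !XY ?mem_enum.
move=> X; rewrite (bigID [in I]) /= big_enum /=; congr (_ * _).
  by apply: eq_bigr => e eI; rewrite /f eI.
by apply: eq_big => e; rewrite ?inE // => /negbTE eI; rewrite /f eI.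
Qed.

Definition centered_G (i : 'I_3) (y : {ffun 'I_5 -> T}) : R :=
  \prod_(e : label) gbar2 p (y (ends i e).1) (y (ends i e).2).

Lemma alt_sum_piH n (i : 'I_3) (H : {set label} -> graph n) :
  (forall I, isH i I (H I)) ->
  \sum_(I : {set label}) (-1) ^+ #|I| * piH m p (H I) = expect (centered_G i).
Proof.
move=> H_isH; rewrite (eq_expect (G := fun y => \sum_(I : {set label})
  (- phat m p) ^+ #|~: I| * \prod_(e in I) g R (y (ends i e).1) (y (ends i e).2))).
  rewrite expect_sum; apply: eq_bigr => I _.
  rewrite expectZ (piH_isH (H_isH I)) (exprNn (phat m p)) mulrA.
  by rewrite signr_cardsC // card_prod card_ord.
by move=> y; rewrite /centered_G /gbar2 prod_subr_expand.
Qed.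

Lemma sum_mu_gbar2 (x : T) : \sum_y mu p y * gbar2 p x y = gbar1 p x.
Proof.
rewrite /gbar1 /g1; under eq_bigr do rewrite mulrBr.
by rewrite sumrB -big_distrl /= sum_mu mul1r; congr (_ - _); apply: eq_bigr => y _; rewrite mulrC.
Qed.

Lemma expect_pendant (I : finType) (w u : I) (K : {ffun I -> T} -> R) :
  u != w -> ignores K u ->
  expect (fun X => gbar2 p (X w) (X u) * K X) = expect (fun X => gbar1 p (X w) * K X).
Proof.
move=> uw Ku; rewrite (expect_integrate_factor (f := fun x X => gbar2 p (X w) x)) //.
  by apply: eq_expect => X; rewrite sum_mu_gbar2.
by move=> x X y; rewrite upd_other // eq_sym.
Qed.

Lemma expect_pendants (I : finType) (c : I) (s : seq I) (K : {ffun I -> T} -> R) :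
  uniq s -> c \notin s -> {in s, forall u, ignores K u} ->
  expect (fun X => (\prod_(u <- s) gbar2 p (X c) (X u)) * K X)
  = expect (fun X => gbar1 p (X c) ^+ size s * K X).
Proof.
elim: s K => [|u s IH] K /=.
  by move=> *; apply: eq_expect => X; rewrite big_nil expr0.
move=> /andP[us uniq_s]; rewrite inE negb_or => /andP[cu cs] K_ign.
rewrite (eq_expect (G := fun X =>
  gbar2 p (X c) (X u) * ((\prod_(u <- s) gbar2 p (X c) (X u)) * K X))); last first.
  by move=> X; rewrite big_cons mulrA.
rewrite expect_pendant; last 2 first.
- by rewrite eq_sym.
- move=> X x; rewrite K_ign ?mem_head //; congr (_ * _); apply: eq_big_seq => u' u's.
  by rewrite !upd_other //; apply: contraNneq us => <-.
rewrite (eq_expect (G := fun X =>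
  (\prod_(u <- s) gbar2 p (X c) (X u)) * (gbar1 p (X c) * K X))); last first.
  by move=> X; rewrite mulrCA.
rewrite IH //; first by apply: eq_expect => X; rewrite exprS -mulrA mulrCA.
move=> u' u's X x; rewrite K_ign ?inE ?u's ?orbT // upd_other //.
by apply: contraNneq cs => ->.
Qed.

Lemma expect_twins (I : finType) (u0 u1 : I) (f : T -> {ffun I -> T} -> R) :
  u0 != u1 -> (forall x, ignores (f x) u0) -> (forall x, ignores (f x) u1) ->
  expect (fun X => f (X u0) X * f (X u1) X) = expect (fun X => (\sum_x mu p x * f x X) ^+ 2).
Proof.
move=> u01 f_u0 f_u1; rewrite expect_integrate_factor //; last first.
  by move=> X y; rewrite upd_other 1?eq_sym // f_u0.
rewrite (eq_expect (G := fun X => f (X u1) X * (\sum_x mu p x * f x X))); last first.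
  by move=> X; rewrite mulrC.
rewrite expect_integrate_factor // => X y.
by apply: eq_bigr => x _; rewrite f_u1.
Qed.

Lemma L2sq_star :
  @L2sq R m p (contr_arity 0 1 1 1) (contr p 0 1 1 1 (gbar p 1) (gbar p 1))
  = \sum_(x : T) mu p x * gbar1 p x ^+ 4.
Proof.
rewrite /L2sq big_tupleS; apply: eq_bigr => x _.
by rewrite big_tuple0 /contr big_tuple0 /mu_prod /= !big_cons !big_nil; ring.
Qed.

Lemma L2sq_cycle :
  @L2sq R m p (contr_arity 1 1 2 2) (contr p 1 1 2 2 (gbar p 2) (gbar p 2))
  = \sum_(s : T) \sum_(t : T) mu p s * mu p t * (\sum_w mu p w * (gbar2 p w s * gbar2 p w t)) ^+ 2.
Proof.
rewrite /L2sq big_tupleS; apply: eq_bigr => s _.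
rewrite big_tupleS; apply: eq_bigr => t _.
rewrite big_tuple0 /contr big_tupleS /mu_prod /= !big_cons big_nil.
under eq_bigr do rewrite big_tuple0 /= !big_cons !big_nil mulr1 -mulrA.
by rewrite mulr1 ?mulrA.
Qed.

Lemma L2sq_path :
  @L2sq R m p (contr_arity 1 1 2 1) (contr p 1 1 2 1 (gbar p 2) (gbar p 1))
  = \sum_(s : T) mu p s * (\sum_w mu p w * (gbar2 p w s * gbar1 p w)) ^+ 2.
Proof.
rewrite /L2sq big_tupleS; apply: eq_bigr => s _.
rewrite big_tuple0 /contr big_tupleS /mu_prod /= !big_cons big_nil.
under eq_bigr do rewrite big_tuple0 /= !big_cons !big_nil mulr1 -mulrA.
by rewrite mulr1 ?mulrA.
Qed.

Lemma expect_centered_star :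
  expect (centered_G 0) = \sum_(x : T) mu p x * gbar1 p x ^+ 4.
Proof.
pose leaves : seq 'I_5 := [:: inord 1; inord 2; inord 3; inord 4].
rewrite (eq_expect (G := fun y =>
    (\prod_(u <- leaves) gbar2 p (y (inord 0)) (y u)) * 1)); last first.
  by move=> y; rewrite /centered_G prod_label !big_cons big_nil !mulr1 !mulrA.
rewrite expect_pendants //= ?inE ?inord_eq //.
rewrite -(expect_coord (inord 0 : 'I_5) (fun x => gbar1 p x ^+ 4)).
by apply: eq_expect => y; rewrite mulr1.
Qed.

Lemma expect_centered_cycle :
  expect (centered_G 1)
  = \sum_(s : T) \sum_(t : T) mu p s * mu p t * (\sum_w mu p w * (gbar2 p w s * gbar2 p w t)) ^+ 2.
Proof.
pose f x (y : {ffun 'I_5 -> T}) := gbar2 p x (y (inord 2)) * gbar2 p x (y (inord 3)).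
have f_ign x y z k : (k <= 1)%N -> f x (upd y (inord k) z) = f x y.
  by move=> k1; rewrite /f !updE !inord_eq //; case: k k1 => [|[]].
rewrite (eq_expect (G := fun y => f (y (inord 0)) y * f (y (inord 1)) y)); last first.
  by move=> y; rewrite /centered_G prod_label /f !mulrA.
rewrite expect_twins ?inord_eq // => [|x y z|x y z]; rewrite ?f_ign //.
pose c (s t : T) := \sum_w mu p w * (gbar2 p w s * gbar2 p w t).
rewrite (expect_coord2 (u := inord 2) (v := inord 3) (fun s t => c s t ^+ 2)) ?inord_eq //.
by apply: eq_bigr => s _; rewrite big_distrr /=; apply: eq_bigr => t _; rewrite mulrA.
Qed.

Lemma expect_centered_path :
  expect (centered_G 2)
  = \sum_(s : T) mu p s * (\sum_w mu p w * (gbar2 p w s * gbar1 p w)) ^+ 2.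
Proof.
rewrite (eq_expect (G := fun y => gbar2 p (y (inord 0)) (y (inord 3)) *
  (gbar2 p (y (inord 1)) (y (inord 4)) *
   (gbar2 p (y (inord 0)) (y (inord 2)) * gbar2 p (y (inord 1)) (y (inord 2)))))); last first.
  have reorder (a b c d : R) : a * b * c * d = b * (d * (a * c)) by ring.
  by move=> y; rewrite /centered_G prod_label reorder.
rewrite expect_pendant ?inord_eq //; last by move=> y z; rewrite !updE !inord_eq.
under eq_expect do rewrite mulrCA.
rewrite expect_pendant ?inord_eq //; last by move=> y z; rewrite !updE !inord_eq.
pose f x (y : {ffun 'I_5 -> T}) := gbar2 p x (y (inord 2)) * gbar1 p x.
have f_ign x y z k : (k <= 1)%N -> f x (upd y (inord k) z) = f x y.
  by move=> k1; rewrite /f !updE !inord_eq //; case: k k1 => [|[]].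
rewrite (eq_expect (G := fun y => f (y (inord 0)) y * f (y (inord 1)) y)); last first.
  by move=> y; rewrite /f; ring.
rewrite expect_twins ?inord_eq // => [|x y z|x y z]; rewrite ?f_ign //.
exact: (expect_coord (inord 2 : 'I_5) (fun s => (\sum_w mu p w * (gbar2 p w s * gbar1 p w)) ^+ 2)).
Qed.

End RandomIntersectionGraph.

Theorem lemma6p2 (R : realType) (n m : nat) (p : R) :
  (8 <= n)%N -> 0 < p < 1 ->
  forall (i : 'I_3) (H : {set label} -> graph n),
  (forall I : {set label}, isH i I (H I)) ->
  let '(l1, l2, l3, l4) := lidx i in
  @L2sq R m p (contr_arity l2 l3 l1 l4)
       (contr p l2 l3 l1 l4 (gbar p l1) (gbar p l4))
  = \sum_(I : {set label}) (-1) ^+ #|I| * piH m p (H I).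
Proof.
move=> _ _ i H H_isH; rewrite (alt_sum_piH m p H_isH).
case: i {H H_isH} => -[|[|[|//]]] lt_i3 /=.
- by rewrite L2sq_star expect_centered_star.
- by rewrite L2sq_cycle expect_centered_cycle.
- by rewrite L2sq_path expect_centered_path.
Qed.
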